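(* Let $\mathbb{X},\mathbb{Y}$ be real Banach spaces of dimension greater than $1$ and let $T\in\mathbb{L}(\mathbb{X},\mathbb{Y})$ be nonzero. Let $0<\delta,\delta_1,\delta_2<\|T\|$. Then: (i) $M_T(\delta)$ is nonempty. (ii) If $\delta_1<\delta_2$ then $M_T(\delta_1)\subseteq M_T(\delta_2)$. Moreover, if $T$ is not a scalar multiple of an isometry, then there exist $0<\delta_1<\delta_2<\|T\|$ such that $M_T(\delta_1)\subsetneq M_T(\delta_2)$. (iii) $M_T=\bigcap_{0<\delta<\|T\|}M_T(\delta)$. (iv) If $\mathbb{X}$ is finite-dimensional, then $T$ is injective if and only if $M_T(\delta)=S_{\mathbb{X}}$ for some $0<\delta<\|T\|$. This equivalence is not necessarily true if $\mathbb{X}$ is infinite-dimensional: there exist an infinite-dimensional Banach space $\mathbb{X}$ and an injective nonzero $T\in\mathbb{L}(\mathbb{X},\mathbb{X})$ such that $M_T(\delta)\neq S_{\mathbb{X}}$ for every $0<\delta<\|T\|$.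
   Context: $\mathbb{L}(\mathbb{X},\mathbb{Y})$ is the space of bounded linear operators with the operator norm; $S_{\mathbb{X}}$ is the unit sphere of $\mathbb{X}$. For $T\in\mathbb{L}(\mathbb{X},\mathbb{Y})$, the norm attainment set is $M_T=\{x\in S_{\mathbb{X}}:\|Tx\|=\|T\|\}$. For nonzero $T$ and $0<\delta<\|T\|$, the $\delta$-approximate norm attainment set is $M_T(\delta)=\{x\in S_{\mathbb{X}}:\|Tx\|>\|T\|-\delta\}$. *)

From HB Require Import structures.
From mathcomp Require Import all_boot all_order all_algebra.
From mathcomp Require Import all_classical all_reals all_analysis.
Set Implicit Arguments. Unset Strict Implicit. Unset Printing Implicit Defensive.
Import Order.TTheory GRing.Theory Num.Theory.
Import numFieldNormedType.Exports.
Local Open Scope classical_set_scope.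
Local Open Scope ring_scope.

Section Defs.
Variable R : realType.

Definition bounded_op (X Y : normedModType R) (T : {linear X -> Y}) : Prop :=
  exists C : R, forall x, `|T x| <= C * `|x|.

Definition opnorm (X Y : normedModType R) (T : {linear X -> Y}) : R :=
  sup [set `|T x| | x in [set x : X | `|x| <= 1]].

Definition sphere (X : normedModType R) : set X := [set x : X | `|x| = 1].

Definition Mset (X Y : normedModType R) (T : {linear X -> Y}) : set X :=
  [set x : X | `|x| = 1 /\ `|T x| = opnorm T].

Definition Mdelta (X Y : normedModType R) (T : {linear X -> Y}) (d : R) : set X :=
  [set x : X | `|x| = 1 /\ opnorm T - d < `|T x|].

Definition dim_gt1 (X : normedModType R) : Prop :=
  exists x y : X, forall a b : R, a *: x + b *: y = 0 -> a = 0 /\ b = 0.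

Definition findim (X : normedModType R) : Prop :=
  exists (n : nat) (e : 'I_n -> X),
    forall x : X, exists c : 'I_n -> R, x = \sum_(i < n) c i *: e i.

Definition scalar_mult_isometry (X Y : normedModType R) (T : {linear X -> Y}) : Prop :=
  exists (c : R) (U : {linear X -> Y}),
    (forall x, `|U x| = `|x|) /\ (forall x, T x = c *: U x).

End Defs.

(* Everything rests on ||T|| = sup {||Tx|| : ||x|| <= 1} and rescaling to the
   unit sphere.  Near-maximisers give (i) and (iii).  A unit vector x with
   0 < ||Tx|| < ||T|| lies in M_T(d2) but not in M_T(d1) when
   ||T|| - d2 < ||Tx|| <= ||T|| - d1; one exists unless ||Tx|| = ||T|| ||x||
   for all x, i.e. unless T is a multiple of an isometry.
   In finite dimension an injective T is bounded below, ||Tx|| >= m ||x||: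
   in a basis T becomes an injective linear map on R^n, whose norm attains a
   positive minimum on the compact unit sphere; then M_T(||T|| - m/2) is the
   whole sphere.  Conversely M_T(d) = S_X rules out unit vectors in the kernel.
   On l^oo the diagonal operator x |-> (x_n / (n+1))_n is injective, but its
   values on the unit vectors e_n have norm 1/(n+1) -> 0, so no M_T(d) is the
   whole sphere. *)

From HB Require Import structures.
From mathcomp Require Import all_boot all_order all_algebra.
From mathcomp Require Import all_classical all_reals all_analysis.
From mathcomp Require Import lra.
Import Order.TTheory GRing.Theory Num.Theory.
Import numFieldNormedType.Exports.
Local Open Scope classical_set_scope.
Local Open Scope ring_scope.
Set Implicit Arguments. Unset Strict Implicit. Unset Printing Implicit Defensive.

Section OperatorNorm.
Variables (R : realType) (X Y : normedModType R) (T : {linear X -> Y}).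

Lemma normT_normalize (x : X) : `|T (`|x|^-1 *: x)| = `|T x| / `|x|.
Proof. by rewrite linearZ normrZ normfV normr_id mulrC. Qed.

Lemma le_Mdelta d1 d2 : d1 <= d2 -> Mdelta T d1 `<=` Mdelta T d2.
Proof. by move=> d12 x [x1 Tx]; split => //; apply: le_lt_trans Tx; rewrite lerB. Qed.

Lemma proper_Mdelta d1 d2 x : d1 < d2 -> `|x| = 1 ->
  opnorm T - d2 < `|T x| <= opnorm T - d1 -> Mdelta T d1 `<` Mdelta T d2.
Proof.
move=> d12 x1 /andP[x_d2 x_d1]; split; first exact/le_Mdelta/ltW.
by move=> /(_ x (conj x1 x_d2)) [_]; rewrite ltNge x_d1.
Qed.

Lemma Mdelta_eq_sphere_injective d :
  d < opnorm T -> Mdelta T d = @sphere R X -> injective T.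
Proof.
move=> d_lt MT x y Txy; apply/eqP; rewrite -subr_eq0; apply: contraT => xy0.
have : @sphere R X (`|x - y|^-1 *: (x - y)) by exact: normfZV.
rewrite -MT => -[_]; rewrite normT_normalize linearB Txy subrr normr0 mul0r.
by rewrite subr_lt0 ltNge (ltW d_lt).
Qed.

Lemma scalar_mult_isometry_of_norm c :
  0 < c -> (forall x, `|T x| = c * `|x|) -> scalar_mult_isometry T.
Proof.
move=> c0 Tc; exists c, (c^-1 \*: T); split => x /=.
  by rewrite normrZ Tc normfV gtr0_norm // mulKf ?gt_eqF.
by rewrite scalerA mulfV ?gt_eqF // scale1r.
Qed.

Lemma Mdelta_neq_sphere d : d < opnorm T ->
  (forall e, 0 < e -> exists2 x, `|x| = 1 & `|T x| < e) -> Mdelta T d <> @sphere R X.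
Proof.
move=> d_lt T_small MT; have [x x1 Tx] : exists2 x, `|x| = 1 & `|T x| < opnorm T - d.
  by apply: T_small; rewrite subr_gt0.
have : @sphere R X x by [].
by rewrite -MT => -[_] /lt_trans /(_ Tx); rewrite ltxx.
Qed.

Hypothesis T_bounded : bounded_op T.

Lemma has_sup_opnorm : has_sup [set `|T x| | x in [set x : X | `|x| <= 1]].
Proof.
split; first by exists `|T 0|, 0 => //=; rewrite normr0.
have [C TC] := T_bounded; exists `|C| => _ [x /= x1 <-].
apply: le_trans (TC x) _; apply: le_trans (ler_wpM2r (normr_ge0 x) (ler_norm C)) _.
by rewrite ler_piMr.
Qed.

Lemma ler_opnorm x : `|x| <= 1 -> `|T x| <= opnorm T.
Proof. by move=> x1; apply: sup_upper_bound; [exact: has_sup_opnorm | exists x]. Qed.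

Lemma opnorm_ge0 : 0 <= opnorm T.
Proof. by apply: le_trans (@ler_opnorm 0 _); rewrite ?normr_ge0 ?normr0 ?ler01. Qed.

Lemma ler_opnormM x : `|T x| <= opnorm T * `|x|.
Proof.
have [->|x0] := eqVneq x 0; first by rewrite linear0 !normr0 mulr0.
by rewrite -ler_pdivrMr ?normr_gt0 // -normT_normalize ler_opnorm ?normfZV.
Qed.

Lemma Mdelta_neq0 d : 0 < d -> d < opnorm T -> Mdelta T d !=set0.
Proof.
move=> d0 d_lt; have [_ [x /= x1 <-] Tx] := sup_adherent d0 has_sup_opnorm.
have Tx0 : 0 < `|T x| by apply: le_lt_trans Tx; rewrite subr_ge0 ltW.
have x0 : x != 0 by apply: contraTneq Tx0 => ->; rewrite linear0 normr0 ltxx.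
exists (`|x|^-1 *: x); split; first exact: normfZV.
rewrite normT_normalize; apply: lt_le_trans Tx _.
by rewrite ler_pdivlMr ?normr_gt0 // ler_piMr.
Qed.

Hypothesis T_neq0 : exists x, T x <> 0.

Lemma opnorm_gt0 : 0 < opnorm T.
Proof.
have [x Tx0] := T_neq0; rewrite lt_neqAle opnorm_ge0 andbT eq_sym.
apply: contra_notN Tx0 => /eqP T0; apply/normr0_eq0/eqP.
by rewrite eq_le normr_ge0 andbT (le_trans (ler_opnormM x)) // T0 mul0r.
Qed.

Lemma Mset_bigcap :
  Mset T = [set x | forall d, 0 < d -> d < opnorm T -> Mdelta T d x].
Proof.
have T_gt0 := opnorm_gt0; apply/seteqP; split=> x.
  by move=> [x1 Tx] d d0 _; split => //; rewrite Tx ltrBlDr ltrDl.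
move=> Mx; have [x1 _] : Mdelta T (opnorm T / 2) x by apply: Mx; lra.
split => //; apply/eqP; rewrite eq_le ler_opnorm ?x1 //= leNgt.
apply/negP => Tx_lt.
have [_] : Mdelta T ((opnorm T - `|T x|) / 2) x.
  by apply: Mx; have := normr_ge0 (T x); lra.
lra.
Qed.

Lemma sphere_lt_opnorm :
  ~ scalar_mult_isometry T -> exists x, `|x| = 1 /\ `|T x| < opnorm T.
Proof.
move=> notSI; apply: contra_notP notSI => attained.
apply: (scalar_mult_isometry_of_norm opnorm_gt0) => x.
have [->|x0] := eqVneq x 0; first by rewrite linear0 !normr0 mulr0.
apply/eqP; rewrite eq_le ler_opnormM /= -ler_pdivlMr ?normr_gt0 //.
rewrite -normT_normalize leNgt; apply/negP => Tx_lt.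
by apply: attained; exists (`|x|^-1 *: x); rewrite normfZV.
Qed.

Lemma sphere_between_0_opnorm : ~ scalar_mult_isometry T ->
  exists x, [/\ `|x| = 1, 0 < `|T x| & `|T x| < opnorm T].
Proof.
move=> /sphere_lt_opnorm [x0 [x0_1 Tx0_lt]].
have [Tx0|Tx0] := eqVneq (T x0) 0; last by exists x0; rewrite normr_gt0.
have T_gt0 := opnorm_gt0.
have [x1 [x1_1 Tx1]] : Mdelta T (opnorm T / 2) !=set0 by apply: Mdelta_neq0; lra.
(* [x0] is in the kernel: push it off by a third of a unit vector outside it *)
pose y := x0 + 3^-1 *: x1.
have Ty : `|T y| = `|T x1| / 3.
  by rewrite linearD linearZ Tx0 add0r normrZ gtr0_norm // mulrC.
have y_ge : 2 / 3 <= `|y|.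
  have := lerB_dist x0 (- (3^-1 *: x1)).
  by rewrite opprK normrN normrZ x0_1 x1_1 gtr0_norm //; lra.
have y0 : y != 0 by rewrite -normr_gt0; lra.
exists (`|y|^-1 *: y); rewrite normfZV // normT_normalize Ty; split => //.
  by rewrite divr_gt0 ?normr_gt0 //; lra.
rewrite ltr_pdivrMr ?normr_gt0 //.
have : `|T x1| <= opnorm T by rewrite ler_opnorm ?x1_1.
nra.
Qed.

Lemma bounded_below_Mdelta_eq_sphere m : 0 < m -> (forall x, m * `|x| <= `|T x|) ->
  exists d, [/\ 0 < d, d < opnorm T & Mdelta T d = @sphere R X].
Proof.
move=> m0 Tm; have [z Tz0] := T_neq0.
have z0 : z != 0 by apply: contra_notN Tz0 => /eqP ->; rewrite linear0.
have m_le : m <= opnorm T.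
  have := Tm (`|z|^-1 *: z); rewrite normfZV // mulr1 => /le_trans; apply.
  by rewrite ler_opnorm ?normfZV.
exists (opnorm T - m / 2); split; [lra | lra |].
apply/seteqP; split=> x; first by case.
by move=> /= x1; split=> //; have := Tm x; rewrite x1 mulr1; lra.
Qed.

End OperatorNorm.

Lemma compact_rV_sphere (R : realType) n : compact [set c : 'rV[R]_n | `|c| = 1].
Proof.
apply: bounded_closed_compact.
  by exists 1; split => // M M1 c /= ->; exact: ltW.
apply: (@preimage_closed _ _ (fun c : 'rV[R]_n => `|c|) [set 1]).
  by move=> c _; exact: norm_continuous.
exact: closed_eq.
Qed.

Section LinearCombination.
Variables (R : realType) (V : normedModType R) (n : nat) (v : 'I_n -> V).

Definition lincomb (c : 'rV[R]_n) : V := \sum_(i < n) c ord0 i *: v i.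

Lemma lincomb_is_linear : linear lincomb.
Proof.
move=> a c c'; rewrite /lincomb scaler_sumr -big_split /=.
by apply: eq_bigr => i _; rewrite !mxE scalerDl scalerA.
Qed.

HB.instance Definition _ :=
  GRing.isLinear.Build R 'rV[R]_n V *:%R lincomb lincomb_is_linear.

Lemma ler_norm_lincomb c : `|lincomb c| <= `|c| * \sum_(i < n) `|v i|.
Proof.
rewrite (le_trans (ler_norm_sum _ _ _)) // mulr_sumr ler_sum // => i _.
rewrite normrZ ler_wpM2r // [`|c|]mx_normrE.
exact: (le_bigmax _ (fun ij : 'I_1 * 'I_n => `|c ij.1 ij.2|) (ord0, i)).
Qed.

Lemma lincomb_continuous : continuous lincomb.
Proof.
apply: bounded_linear_continuous; apply/linear_boundedP.
near=> r => c; apply: le_trans (ler_norm_lincomb c) _.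
rewrite [r * _]mulrC; apply: ler_wpM2l; first exact: normr_ge0.
by near: r; apply: nbhs_pinfty_ge; exact: num_real.
Unshelve. all: by end_near.
Qed.

Lemma lincomb_bounded_below :
  injective lincomb -> exists2 m, 0 < m & forall c, m * `|c| <= `|lincomb c|.
Proof.
move=> lincomb_inj.
have [[c1 c1_1]|sphere0] := pselect (exists c : 'rV[R]_n, `|c| = 1); last first.
  exists 1 => // c; have [->|c0] := eqVneq c 0; first by rewrite normr0 mulr0.
  by case: sphere0; exists (`|c|^-1 *: c); exact: normfZV.
have norm_lincomb_continuous : continuous (fun c => `|lincomb c|).
  move=> c; apply: continuous_comp; first exact: lincomb_continuous.
  exact: norm_continuous.
have [c0 /[!inE] c0_1 c0_min] := compact_EVT_min (ex_intro _ c1 c1_1)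
  (@compact_rV_sphere R n) (continuous_subspaceT norm_lincomb_continuous).
exists `|lincomb c0|.
  rewrite normr_gt0; apply: contra_eqN c0_1 => /eqP lc0.
  have -> : c0 = 0 by apply: lincomb_inj; rewrite lc0 linear0.
  by rewrite normr0 eq_sym oner_eq0.
move=> c; have [->|c_neq0] := eqVneq c 0; first by rewrite normr0 mulr0.
have := c0_min _ (mem_set (normfZV c_neq0)).
by rewrite normT_normalize ler_pdivlMr ?normr_gt0 // mulrC.
Qed.

End LinearCombination.

Section FiniteDimensional.
Variables (R : realType) (X : normedModType R).

Definition spanning n (e : 'I_n -> X) :=
  forall x, exists c : 'I_n -> R, x = \sum_(i < n) c i *: e i.

Lemma spanning_drop n (e : 'I_n.+1 -> X) (c : 'I_n.+1 -> R) j :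
  spanning e -> \sum_(i < n.+1) c i *: e i = 0 -> c j != 0 ->
  spanning (fun k : 'I_n => e (lift j k)).
Proof.
move=> e_span rel cj0 x; have [a ->] := e_span x.
have ej : e j = - (c j)^-1 *: \sum_(k < n) c (lift j k) *: e (lift j k).
  move/eqP: rel; rewrite (bigD1_ord j) //= addr_eq0 => /eqP rel.
  by rewrite scaleNr -scalerN -rel scalerA mulVf // scale1r.
exists (fun k => a (lift j k) - a j * (c j)^-1 * c (lift j k)).
rewrite (bigD1_ord j) //= ej scaleNr scalerN scalerA addrC scaler_sumr -sumrB.
by apply: eq_bigr => k _; rewrite scalerBl scalerA.
Qed.

Lemma findim_basis : findim X -> exists n (e : 'I_n -> X),
  injective (lincomb e) /\ forall x, exists c, x = lincomb e c.
Proof.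
move=> [n0 [e0 e0_span]].
have spanning_n0 : exists n, `[< exists e : 'I_n -> X, spanning e >].
  by exists n0; apply/asboolP; exists e0.
(* a spanning family of minimal size is free *)
case: (ex_minnP spanning_n0) => n /asboolP [e e_span] n_min.
exists n, e; split; last first.
  move=> x; have [a ->] := e_span x; exists (\row_i a i).
  by apply: eq_bigr => i _; rewrite mxE.
move=> c c' /eqP; rewrite -subr_eq0 -linearB => /eqP rel.
apply/eqP; rewrite -subr_eq0; apply/eqP/rowP => i; rewrite [RHS]mxE.
apply/eqP; apply: contraT => cc'i.
move: e e_span c c' rel i cc'i n_min.
case: n => [|m] e e_span c c' rel i cc'i n_min; first by have := ltn_ord i.
have /n_min : `[< exists e' : 'I_m -> X, spanning e' >].
  apply/asboolP; exists (fun k => e (lift i k)).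
  by apply: (spanning_drop (c := fun k => (c - c') ord0 k)).
by rewrite ltnn.
Qed.

End FiniteDimensional.

Lemma findim_bounded_below (R : realType) (X Y : normedModType R)
    (T : {linear X -> Y}) :
  findim X -> injective T -> exists2 m, 0 < m & forall x, m * `|x| <= `|T x|.
Proof.
move=> /findim_basis [n [e [e_inj e_onto]]] T_inj.
have lincombT c : T (lincomb e c) = lincomb (T \o e) c.
  by rewrite linear_sum; apply: eq_bigr => i _; rewrite linearZ.
have [m m0 Tm] : exists2 m, 0 < m & forall c, m * `|c| <= `|lincomb (T \o e) c|.
  by apply: lincomb_bounded_below => c c'; rewrite -!lincombT => /T_inj /e_inj.
have K0 : 0 < \sum_(i < n) `|e i| + 1 by rewrite ltr_wpDl // sumr_ge0.
exists (m / (\sum_(i < n) `|e i| + 1)); first by rewrite divr_gt0.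
move=> x; have [c ->] := e_onto x; rewrite lincombT; apply: le_trans (Tm c).
rewrite mulrAC ler_pdivrMr // -mulrA ler_pM2l //.
by apply: le_trans (ler_norm_lincomb e c) _; rewrite ler_wpM2l // lerDl.
Qed.

Section BoundedSequences.
Variable R : realType.

Definition bounded_seq : pred (nat -> R) :=
  fun u => `[< exists M, forall n, `|u n| <= M >].

Lemma bounded_seq_subsemimod_closed : GRing.subsemimod_closed bounded_seq.
Proof.
split; first split.
- by apply/asboolP; exists 0 => n; rewrite normr0.
- move=> u v /asboolP[Mu uM] /asboolP[Mv vM]; apply/asboolP; exists (Mu + Mv) => n.
  exact: le_trans (ler_normD _ _) (lerD (uM n) (vM n)).
- move=> a u /asboolP[M uM]; apply/asboolP; exists (`|a| * M) => n.
  by rewrite normrM ler_wpM2l.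
Qed.

HB.instance Definition _ :=
  GRing.isSubmodClosed.Build R (nat -> R) bounded_seq bounded_seq_subsemimod_closed.

Record linf := Linf { lseq : nat -> R; lseqP : bounded_seq lseq }.
HB.instance Definition _ := [isSub for lseq].
HB.instance Definition _ := [Choice of linf by <:].
HB.instance Definition _ := [SubChoice_isSubLmodule of linf by <:].

Lemma linf_ext (x y : linf) : lseq x =1 lseq y -> x = y.
Proof. by move=> xy; apply/val_inj/funext. Qed.

Definition linf_norm (x : linf) : R := sup (range (fun n => `|lseq x n|)).

Lemma has_sup_linf_norm (x : linf) : has_sup (range (fun n => `|lseq x n|)).
Proof.
split; first by exists `|lseq x 0|, 0%N.
by have /asboolP[M xM] := lseqP x; exists M => _ [n _ <-].
Qed.

Lemma ler_lseq_norm (x : linf) n : `|lseq x n| <= linf_norm x.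
Proof. by apply: sup_upper_bound; [exact: has_sup_linf_norm | exists n]. Qed.

Lemma linf_norm_le (x : linf) M : (forall n, `|lseq x n| <= M) -> linf_norm x <= M.
Proof.
by move=> xM; apply: ge_sup; [exists `|lseq x 0|, 0%N | move=> _ [n _ <-]].
Qed.

Lemma linf_normD (x y : linf) : linf_norm (x + y) <= linf_norm x + linf_norm y.
Proof.
apply: linf_norm_le => n; apply: le_trans (ler_normD _ _) _.
exact: lerD (ler_lseq_norm _ _) (ler_lseq_norm _ _).
Qed.

Lemma linf_normZ (a : R) (x : linf) : linf_norm (a *: x) = `|a| * linf_norm x.
Proof.
have normZ_le b y : linf_norm (b *: y) <= `|b| * linf_norm y.
  by apply: linf_norm_le => n; rewrite [lseq _ n]/= normrM ler_wpM2l ?ler_lseq_norm.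
apply/eqP; rewrite eq_le normZ_le /=.
have [->|a0] := eqVneq a 0.
  by rewrite normr0 mul0r; apply: le_trans (ler_lseq_norm _ 0%N).
rewrite -ler_pdivlMl ?normr_gt0 // -normfV.
by apply: le_trans (normZ_le _ _); rewrite scalerA mulVf // scale1r.
Qed.

Lemma linf_norm_eq0 (x : linf) : linf_norm x = 0 -> x = 0.
Proof.
move=> x0; apply: linf_ext => n; apply/normr0_eq0/eqP.
by rewrite eq_le normr_ge0 andbT -x0 ler_lseq_norm.
Qed.

HB.instance Definition _ :=
  Lmodule_isNormed.Build R linf linf_normD linf_normZ linf_norm_eq0.

Section Completeness.
Variable F : set_system linf.
Hypotheses (F_proper : ProperFilter F) (F_cauchy : cauchy_ex F).

Let coord n (y : linf) := lseq y n.

Lemma cvg_coord n : cvg (coord n @ F).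
Proof.
apply: cauchy_cvg; apply: cauchy_exP => e e0.
have [x Fx] := F_cauchy e0; exists (coord n x).
change (F (coord n @^-1` ball (coord n x) e)); apply: filterS Fx => y.
rewrite -!ball_normE /= => xy.
exact: le_lt_trans (ler_lseq_norm (x - y) n) xy.
Qed.

Let g n := lim (coord n @ F).

Lemma ball_coord_lim x e n : 0 < e -> F (ball x e) -> `|lseq x n - g n| <= e.
Proof.
move=> e0 Fx; suff : closed_ball (lseq x n) e (g n) by rewrite closed_ballE.
apply: (closed_cvg _ (@closed_ball_closed _ _ _ _) _ _ (@cvg_coord n)).
apply: filterS Fx => y; rewrite -ball_normE => /= xy; apply: subset_closed_ball.
by rewrite -ball_normE /=; exact: le_lt_trans (ler_lseq_norm (x - y) n) xy.
Qed.

Lemma bounded_seq_lim : bounded_seq g.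
Proof.
have [x Fx] := F_cauchy ltr01; apply/asboolP; exists (`|x| + 1) => n.
rewrite -[g n](subKr (lseq x n)); apply: le_trans (ler_normB _ _) _.
exact: lerD (ler_lseq_norm x n) (ball_coord_lim n ltr01 Fx).
Qed.

Lemma cvg_linf : cvg F.
Proof.
apply/cvg_ex; exists (Linf bounded_seq_lim); apply/cvgrPdist_le => e e0.
have e2 : 0 < e / 2 by rewrite divr_gt0.
have [x Fx] := F_cauchy e2; have x_g n := ball_coord_lim n e2 Fx.
apply: filterS Fx => y; rewrite -ball_normE /= => xy.
apply: linf_norm_le => n; apply: le_trans (ler_distD (lseq x n) _ _) _.
have := x_g n; have := le_lt_trans (ler_lseq_norm (x - y) n) xy.
rewrite distrC [lseq (x - y) n]/=; lra.
Qed.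

End Completeness.

HB.instance Definition _ := Uniform_isComplete.Build linf
  (fun F F_proper F_cauchy => cvg_linf F_proper ((cauchyP F).1 F_cauchy)).
End BoundedSequences.

Section HarmonicDiagonal.
Variable R : realType.
Local Notation linf := (linf R).

Lemma ler_norm_divSn (t : R) n : `|t / n.+1%:R| <= `|t|.
Proof. by rewrite normrM normfV normr_nat ler_piMr // invf_le1 // ler1n. Qed.

Lemma bounded_seq_harmonic (x : linf) : bounded_seq (fun n => lseq x n / n.+1%:R).
Proof.
have /asboolP[M xM] := lseqP x; apply/asboolP; exists M => n.
exact: le_trans (ler_norm_divSn _ n) (xM n).
Qed.

Definition harmonic_diag (x : linf) : linf := Linf (bounded_seq_harmonic x).

Lemma harmonic_diag_is_linear : linear harmonic_diag.
Proof.
move=> a x y; apply: linf_ext => n.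
change ((a * lseq x n + lseq y n) / n.+1%:R
        = a * (lseq x n / n.+1%:R) + lseq y n / n.+1%:R).
by rewrite mulrDl mulrA.
Qed.

HB.instance Definition _ :=
  GRing.isLinear.Build R linf linf *:%R harmonic_diag harmonic_diag_is_linear.

Lemma harmonic_diag_bounded : bounded_op harmonic_diag.
Proof.
exists 1 => x; rewrite mul1r; apply: linf_norm_le => n.
exact: le_trans (ler_norm_divSn _ n) (ler_lseq_norm x n).
Qed.

Lemma harmonic_diag_inj : injective harmonic_diag.
Proof.
move=> x y xy; apply: linf_ext => n.
have /(congr1 (fun t => t * n.+1%:R)) := congr1 (fun u => lseq u n) xy.
by rewrite /= !divfK.
Qed.

Lemma bounded_seq_indicator i : bounded_seq (fun n => ((n == i)%:R : R)).
Proof. by apply/asboolP; exists 1 => n; case: eqP; rewrite ?normr1 ?normr0. Qed.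

Definition unit_seq i : linf := Linf (bounded_seq_indicator i).

Lemma norm_unit_seq i : `|unit_seq i| = 1.
Proof.
apply/eqP; rewrite eq_le; apply/andP; split.
  by apply: linf_norm_le => n /=; case: eqP; rewrite ?normr1 ?normr0.
by have := ler_lseq_norm (unit_seq i) i; rewrite /= eqxx normr1.
Qed.

Lemma norm_harmonic_diag_unit i : `|harmonic_diag (unit_seq i)| <= i.+1%:R^-1.
Proof.
apply: linf_norm_le => n /=; case: eqP => [->|_]; last by rewrite mul0r normr0.
by rewrite mul1r ger0_norm.
Qed.

Lemma harmonic_diag_small e : 0 < e ->
  exists2 x, `|x| = 1 & `|harmonic_diag x| < e.
Proof.
move=> e0; exists (unit_seq (Num.truncn e^-1)); first exact: norm_unit_seq.
apply: le_lt_trans (norm_harmonic_diag_unit _) _.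
by rewrite -[ltRHS]invrK ltf_pV2 ?posrE ?invr_gt0 // truncnS_gt.
Qed.

Lemma linf_not_findim : ~ findim linf.
Proof.
move=> [n [e e_span]]; have /choice[c cP] := fun i : 'I_n.+1 => e_span (unit_seq i).
pose C : 'M[R]_(n.+1, n) := \matrix_(i, k) c i k.
pose E : 'M[R]_(n, n.+1) := \matrix_(k, j) lseq (e k) j.
have CE : (1%:M : 'M[R]_n.+1) = C *m E.
  apply/matrixP => i j; rewrite !mxE eq_sym.
  have /= -> := congr1 (fun u => lseq u j) (cP i).
  by elim/big_rec2: _ => [//|k y z _ <-]; rewrite !mxE.
have := mxrankM_maxr C E; rewrite -CE mxrank1 => /leq_trans/(_ (rank_leq_row E)).
by rewrite ltnn.
Qed.

End HarmonicDiagonal.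

Unset Implicit Arguments.

Theorem proposition2p1 (R : realType) (X Y : completeNormedModType R)
    (T : {linear X -> Y}) :
  dim_gt1 X -> dim_gt1 Y -> bounded_op T -> (exists x, T x <> 0) ->
  (* (i) *)
  (forall d : R, 0 < d -> d < opnorm T -> Mdelta T d !=set0) /\
  (* (ii) *)
  (forall d1 d2 : R, 0 < d1 -> 0 < d2 -> d1 < opnorm T -> d2 < opnorm T ->
      d1 < d2 -> Mdelta T d1 `<=` Mdelta T d2) /\
  (~ scalar_mult_isometry T ->
      exists d1 d2 : R, [/\ 0 < d1, d1 < d2, d2 < opnorm T &
                            Mdelta T d1 `<` Mdelta T d2]) /\
  (* (iii) *)
  Mset T = [set x : X | forall d : R, 0 < d -> d < opnorm T -> Mdelta T d x] /\
  (* (iv) *)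
  (findim X ->
     (injective T <->
      exists d : R, [/\ 0 < d, d < opnorm T & Mdelta T d = @sphere R X])) /\
  (exists (Z : completeNormedModType R) (S : {linear Z -> Z}),
     [/\ ~ findim Z, bounded_op S, (exists z, S z <> 0), injective S &
         forall d : R, 0 < d -> d < opnorm S -> Mdelta S d <> @sphere R Z]).
Proof.
move=> _ _ T_bounded T_neq0.
have T_gt0 := opnorm_gt0 T_bounded T_neq0.
split; [|split; [|split; [|split; [|split]]]].
- by move=> d; apply: Mdelta_neq0.
- by move=> d1 d2 _ _ _ _ /ltW; exact: le_Mdelta.
- move=> /(sphere_between_0_opnorm T_bounded T_neq0) [x [x1 Tx0 Tx_lt]].
  exists ((opnorm T - `|T x|) / 2), (opnorm T - `|T x| / 2); split; [lra|lra|lra|].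
  by apply: (proper_Mdelta (x := x)) => //; [lra | apply/andP; split; lra].
- exact: Mset_bigcap.
- move=> X_findim; split=> [T_inj|[d [_ d_lt MT]]].
    have [m m0 Tm] := findim_bounded_below X_findim T_inj.
    exact: bounded_below_Mdelta_eq_sphere Tm.
  exact: Mdelta_eq_sphere_injective MT.
- exists (linf R), (@harmonic_diag R); split.
  + exact: linf_not_findim.
  + exact: harmonic_diag_bounded.
  + exists (unit_seq R 0) => /(congr1 (fun u => lseq u 0)) /=.
    by rewrite mul1r invr1 => /eqP; rewrite oner_eq0.
  + exact: harmonic_diag_inj.
  + by move=> d _ d_lt; apply: Mdelta_neq_sphere d_lt (@harmonic_diag_small R).
Qed.
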